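(* Let $\mathrm{HTG}(m,n,\ell)$ be a honeycomb toroidal graph in normal form ($0\le \ell\le n/2$). Its girth is $6$, except in the following cases, in which its girth is $4$: (1) $n=4$; (2) $m=1$, $n>4$ and $\ell=3$; (3) $m=1$, $n>4$, $n\equiv 2\pmod 4$ and $\ell=n/2$; (4) $m=1$, $n>4$, $n\equiv 0\pmod 4$ and $\ell=(n-2)/2$; (5) $m=2$, $n>4$ and $\ell\in\{0,2\}$.
   Context: Honeycomb toroidal graph: let $m\ge 1$ be an integer, $n\ge 4$ an even integer, and $\ell$ an integer with $\ell\equiv m \pmod 2$. The graph $\mathrm{HTG}(m,n,\ell)$ has vertex set $\{u_{i,j}: 0\le i\le m-1,\ j\in\mathbb{Z}_n\}$ (second subscripts are taken modulo $n$; the vertices $u_{i,0},\dots,u_{i,n-1}$ form column $i$) and the following edges: vertical edges $u_{i,j}u_{i,j+1}$ for all $0\le i\le m-1$ and all $j$; flat edges $u_{i,j}u_{i+1,j}$ for $0\le i\le m-2$ and all $j$ with $i+j$ odd; jump edges $u_{m-1,j}u_{0,j+\ell}$ for all $j$ with $j\equiv m\pmod 2$. Only parameters for which this is a simple 3-regular graph are allowed (in particular, when $m=1$ one requires $\ell\not\equiv\pm1\pmod n$). The graph is in normal form if $0\le\ell\le n/2$. The girth is the length of a shortest cycle. *)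

From mathcomp Require Import all_boot.
Set Implicit Arguments. Unset Strict Implicit. Unset Printing Implicit Defensive.

(* Honeycomb toroidal graph HTG(m,n,l) on vertices u_{i,j} = (i, j) : 'I_m * 'I_n,
   with second coordinate read modulo n.  Here l is a natural number
   (normal form 0 <= l <= n/2). *)
Definition htg_adj (m n l : nat) : rel ('I_m * 'I_n) :=
  fun u v =>
    let i := nat_of_ord u.1 in let j := nat_of_ord u.2 in
    let i' := nat_of_ord v.1 in let j' := nat_of_ord v.2 in
    [|| (i == i') && ((j' == (j + 1) %% n) || (j == (j' + 1) %% n)),
        (j == j') && (((i' == i + 1) && odd (i + j)) || ((i == i' + 1) && odd (i' + j'))),
        [&& i == m - 1, i' == 0, j %% 2 == m %% 2 & j' == (j + l) %% n]
      | [&& i' == m - 1, i == 0, j' %% 2 == m %% 2 & j == (j' + l) %% n]].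

Arguments htg_adj : clear implicits.

Definition is_graph_cycle (T : eqType) (e : rel T) (c : seq T) : bool :=
  ucycleb e c && (2 < size c).

Definition girth_is (T : eqType) (e : rel T) (g : nat) : Prop :=
  (exists c, is_graph_cycle e c /\ size c = g) /\
  (forall c, is_graph_cycle e c -> g <= size c).

(* 1. The colour (i + j) mod 2 flips along every edge, so every cycle has even length.
   2. Every vertex has exactly one up-, one down- and one across-neighbour, so the four
      edges of a 4-cycle never backtrack.  Up to rotation and reflection the cycle is then
      a vertical square, a hook (one across edge, three vertical ones) or a ladder (across
      and vertical edges alternating); solving the row/column arithmetic of each pattern
      shows that 4-cycles exist only for [square_parameters], which is exactly the list of
      exceptional cases of the theorem ([exceptionalE]).
   3. Explicit 4-cycles in the exceptional cases and explicit hexagons otherwise give the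
      matching upper bound; the theorem follows in [htg_girth]. *)

From mathcomp Require Import all_boot zify.

Lemma modn_lt_double x n : x < n + n -> x %% n = x /\ x < n \/ x %% n = x - n /\ n <= x.
Proof.
case: (ltnP x n) => lt_xn lt_x2n; first by left; rewrite modn_small.
by right; rewrite -{1}(subnK lt_xn) modnDr modn_small //; lia.
Qed.

Ltac split_hyps := repeat match goal with
  | H : _ \/ _ |- _ => destruct H
  | H : _ /\ _ |- _ => destruct H
  end.

Section HoneycombGirth.

Local Set Implicit Arguments.
Local Unset Strict Implicit.

(* The parameters of HTG(m, n, l) in normal form, stated arithmetically: n is even,
   l has the parity of m, 0 <= l <= n/2, and for m = 1 the graph is simple (l <> 1). *)
Variables m n l : nat.
Hypothesis m_pos : 0 < m.
Hypothesis n_ge4 : 4 <= n.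
Hypothesis n_even : n %% 2 = 0.
Hypothesis l_parity : l %% 2 = m %% 2.
Hypothesis l2_le_n : l + l <= n.
Hypothesis l_simple : m = 1 -> 1 < l.

Definition in_range (p : nat * nat) : bool := (p.1 < m) && (p.2 < n).

Definition up_step (p q : nat * nat) : Prop :=
  q.1 = p.1 /\ (q.2 = p.2.+1 /\ p.2.+1 < n \/ q.2 = 0 /\ p.2.+1 = n).

Definition vert_step (p q : nat * nat) : Prop := up_step p q \/ up_step q p.

Definition flat_step (p q : nat * nat) : Prop :=
  q.2 = p.2 /\ q.1 = p.1.+1 /\ (p.1 + p.2) %% 2 = 1.

Definition jump_step (p q : nat * nat) : Prop :=
  p.1.+1 = m /\ q.1 = 0 /\ p.2 %% 2 = m %% 2 /\ (q.2 = p.2 + l \/ q.2 + n = p.2 + l).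

Definition across_step (p q : nat * nat) : Prop :=
  flat_step p q \/ flat_step q p \/ jump_step p q \/ jump_step q p.

Definition adjacent (p q : nat * nat) : Prop := vert_step p q \/ across_step p q.

Lemma up_step_functional p q r : up_step p q -> up_step p r -> q = r.
Proof.
case: p q r => [i j] [i1 j1] [i2 j2]; rewrite /up_step /= => *.
by split_hyps; congr (_, _); lia.
Qed.

Lemma up_step_injective p q r : in_range p -> in_range q ->
  up_step p r -> up_step q r -> p = q.
Proof.
case: p q r => [i1 j1] [i2 j2] [i j]; rewrite /in_range /up_step /= => *.
by split_hyps; congr (_, _); lia.
Qed.

Lemma vert_step_sym p q : vert_step p q -> vert_step q p.
Proof. by rewrite /vert_step; tauto. Qed.

Lemma across_step_sym p q : across_step p q -> across_step q p.
Proof. by rewrite /across_step; tauto. Qed.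

Lemma across_step_functional p q r : in_range q -> in_range r ->
  across_step p q -> across_step p r -> q = r.
Proof.
case: p q r => [i j] [i1 j1] [i2 j2].
rewrite /in_range /across_step /flat_step /jump_step /= => *.
by split_hyps; congr (_, _); lia.
Qed.

Lemma up_turn p q r : in_range p -> in_range r ->
  up_step p q -> vert_step q r -> p <> r -> up_step q r.
Proof.
move=> rp rr pq [//|rq] neq_pr; case: neq_pr.
exact: up_step_injective rq.
Qed.

Lemma down_turn p q r : up_step q p -> vert_step q r -> p <> r -> up_step r q.
Proof.
move=> qp [qr|//] neq_pr; case: neq_pr.
exact: up_step_functional qr.
Qed.

Definition square_parameters : Prop :=
  n = 4 \/ m = 1 /\ (l = 3 \/ l + l = n \/ l + l + 2 = n) \/ m = 2 /\ (l = 0 \/ l = 2).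

Lemma vertical_square p q r s :
  up_step p q -> up_step q r -> up_step r s -> up_step s p -> n = 4.
Proof.
case: p q r s => [i1 j1] [i2 j2] [i3 j3] [i4 j4]; rewrite /up_step /= => *.
by split_hyps; lia.
Qed.

(* Hook: an across edge closed by three up steps must be a jump inside the single column
   (m = 1) shifting rows by 3. *)
Lemma hook_square p q r s : in_range p -> in_range q ->
  across_step p q -> up_step q r -> up_step r s -> up_step s p -> m = 1 /\ l = 3.
Proof.
case: p q r s => [i1 j1] [i2 j2] [i3 j3] [i4 j4].
rewrite /in_range /across_step /flat_step /jump_step /up_step /= => *.
by split_hyps; lia.
Qed.

(* Ladder with a flat rung: two flat rungs in consecutive rows have opposite parities, so
   the other rung is a jump between columns 0 and 1 (m = 2) with shift l = 0 or +-2. *)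
Lemma ladder_flat p q r s :
  in_range p -> in_range q -> in_range r -> in_range s ->
  flat_step p q -> vert_step q r -> across_step r s -> vert_step s p ->
  m = 2 /\ (l = 0 \/ l = 2).
Proof.
case: p q r s => [i1 j1] [i2 j2] [i3 j3] [i4 j4].
rewrite /in_range /vert_step /across_step /flat_step /jump_step /up_step /= => *.
by split_hyps; subst; lia.
Qed.

(* Ladder with two jump rungs: the parity of jump sources forces a single column (m = 1),
   and then 2l = 0, 2 or n - 2 modulo n. *)
Lemma ladder_jump p q r s :
  in_range p -> in_range q -> in_range r -> in_range s ->
  jump_step p q -> vert_step q r -> jump_step r s \/ jump_step s r -> vert_step s p ->
  m = 1 /\ (l + l = n \/ l + l + 2 = n).
Proof.
case: p q r s => [i1 j1] [i2 j2] [i3 j3] [i4 j4].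
rewrite /in_range /vert_step /jump_step /up_step /= => *.
by split_hyps; subst; lia.
Qed.

Lemma ladder_square p q r s :
  in_range p -> in_range q -> in_range r -> in_range s ->
  across_step p q -> vert_step q r -> across_step r s -> vert_step s p ->
  square_parameters.
Proof.
(* Reflecting the square (p q r s -> q p s r) orients the rung p q forwards. *)
wlog pq : p q r s / flat_step p q \/ jump_step p q.
  move=> wlog_pq rp rq rr rs apq vqr ars vsp.
  have [pq|qp] : (flat_step p q \/ jump_step p q) \/ (flat_step q p \/ jump_step q p)
    by rewrite /across_step in apq; tauto.
  - exact: (wlog_pq p q r s).
  - apply: (wlog_pq q p s r) => //; exact: across_step_sym || exact: vert_step_sym.
rewrite /square_parameters => rp rq rr rs apq vqr ars vsp.
case: pq => [pq|pq]; first by have := ladder_flat rp rq rr rs pq vqr ars vsp; lia.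
case: (ars) => [flat_rs|[flat_sr|jump_rs]].
- by have := ladder_flat rr rs rp rq flat_rs vsp apq vqr; lia.
- have := ladder_flat rs rr rq rp flat_sr (vert_step_sym vqr) (across_step_sym apq)
    (vert_step_sym vsp).
  lia.
- by have := ladder_jump rp rq rr rs pq vqr jump_rs vsp; lia.
Qed.

(* A 4-cycle through an across edge p q: by uniqueness of across-neighbours its two
   neighbouring edges are vertical, so it is a hook or a ladder. *)
Lemma across_square p q r s :
  in_range p -> in_range q -> in_range r -> in_range s ->
  across_step p q -> adjacent q r -> adjacent r s -> adjacent s p ->
  p <> r -> q <> s -> square_parameters.
Proof.
move=> rp rq rr rs apq aqr ars asp neq_pr neq_qs.
have vqr : vert_step q r.
  case: aqr => [//|aqr]; case: neq_pr.
  exact: across_step_functional rp rr (across_step_sym apq) aqr.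
have vsp : vert_step s p.
  case: asp => [//|/across_step_sym asp]; case: neq_qs.
  exact: across_step_functional rq rs apq asp.
case: ars => [vrs|ars]; last exact: ladder_square rp rq rr rs apq vqr ars vsp.
rewrite /square_parameters.
case: vqr => [uqr|urq].
- have urs := up_turn rq rs uqr vrs neq_qs.
  have usp := up_turn rr rp urs vsp (nesym neq_pr).
  by have := hook_square rp rq apq uqr urs usp; lia.
- have usr := down_turn urq vrs neq_qs.
  have ups := down_turn usr vsp (nesym neq_pr).
  by have := hook_square rq rp (across_step_sym apq) ups usr urq; lia.
Qed.

Lemma adjacent_square p q r s :
  in_range p -> in_range q -> in_range r -> in_range s ->
  adjacent p q -> adjacent q r -> adjacent r s -> adjacent s p ->
  p <> r -> q <> s -> square_parameters.
Proof.
move=> rp rq rr rs apq aqr ars asp neq_pr neq_qs.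
have neq_rp := nesym neq_pr; have neq_sq := nesym neq_qs.
case: (apq) => [vpq|xpq]; first case: (aqr) => [vqr|xqr]; first case: (ars) => [vrs|xrs];
  first case: (asp) => [vsp|xsp].
- left; case: vpq => [upq|uqp].
  + have uqr := up_turn rp rr upq vqr neq_pr.
    have urs := up_turn rq rs uqr vrs neq_qs.
    have usp := up_turn rr rp urs vsp neq_rp.
    exact: vertical_square upq uqr urs usp.
  + have urq := down_turn uqp vqr neq_pr.
    have usr := down_turn urq vrs neq_qs.
    have ups := down_turn usr vsp neq_rp.
    exact: vertical_square ups usr urq uqp.
- exact: across_square rs rp rq rr xsp apq aqr ars neq_sq neq_pr.
- exact: across_square rr rs rp rq xrs asp apq aqr neq_rp neq_sq.
- exact: across_square rq rr rs rp xqr ars asp apq neq_qs neq_rp.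
- exact: across_square rp rq rr rs xpq aqr ars asp neq_pr neq_qs.
Qed.

Lemma adjacent_parity p q : adjacent p q -> odd (q.1 + q.2) = ~~ odd (p.1 + p.2).
Proof.
case: p q => [i j] [i' j'].
rewrite /adjacent /vert_step /across_step /flat_step /jump_step /up_step /= => *.
by split_hyps; lia.
Qed.

Definition coords (u : 'I_m * 'I_n) : nat * nat := (nat_of_ord u.1, nat_of_ord u.2).

Lemma in_range_coords u : in_range (coords u).
Proof. by case: u => i j; rewrite /in_range /= !ltn_ord. Qed.

Lemma coords_inj : injective coords.
Proof. by case=> [i j] [i' j'] [/val_inj-> /val_inj->]. Qed.

Ltac split_mod := match goal with
  | |- context [?x %% n] => have [[-> ?]|[-> ?]] := @modn_lt_double x n ltac:(lia)
  | H : context [?x %% n] |- _ =>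
      move: H; have [[-> ?]|[-> ?]] := @modn_lt_double x n ltac:(lia); move=> H
  end.

Lemma htg_adjE u v : htg_adj m n l u v <-> adjacent (coords u) (coords v).
Proof.
case: u v => [[i lt_im] [j lt_jn]] [[i' lt_i'm] [j' lt_j'n]].
rewrite /htg_adj /adjacent /vert_step /up_step /across_step /flat_step /jump_step /=.
split.
- case/or4P => [/andP[Hi /orP[] Hj] | /andP[Hj /orP[] Hi] | Hjump | Hjump];
    [left; left | left; right | right; left | right; right; left
    | right; right; right; left | right; right; right; right];
    repeat split_mod; lia.
- case => [[Hup|Hup]|[Hflat|[Hflat|[Hjump|Hjump]]]]; apply/or4P;
    [apply: Or41 | apply: Or41 | apply: Or42 | apply: Or42 | apply: Or43 | apply: Or44];
    repeat split_mod; lia.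
Qed.

Definition color (u : 'I_m * 'I_n) : bool := odd (u.1 + u.2).

Lemma htg_adj_color u v : htg_adj m n l u v -> color v = ~~ color u.
Proof. by move/htg_adjE/adjacent_parity. Qed.

Lemma path_color u s : path (htg_adj m n l) u s -> color (last u s) = color u (+) odd (size s).
Proof.
elim: s u => [|v s IHs] u /=; first by rewrite addbF.
by case/andP=> /htg_adj_color uv /IHs->; rewrite uv addNb addbN.
Qed.

Lemma cycle_size_even c : cycle (htg_adj m n l) c -> ~~ odd (size c).
Proof.
case: c => [//|u s] /path_color; rewrite last_rcons size_rcons /=.
by case: (color u); case: (odd (size s)).
Qed.

Lemma four_cycle_square c :
  is_graph_cycle (htg_adj m n l) c -> size c = 4 -> square_parameters.
Proof.
case: c => [|a [|b [|c [|d []]]]] //; rewrite /is_graph_cycle /ucycleb /= !inE.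
case/andP=> /andP[/and5P[ab bc cd da _]] uniq_abcd _ _.
apply: (adjacent_square (in_range_coords a) (in_range_coords b) (in_range_coords c)
  (in_range_coords d)); try exact/htg_adjE.
- by move/coords_inj=> eq_ac; move: uniq_abcd; rewrite eq_ac eqxx !orbT.
- by move/coords_inj=> eq_bd; move: uniq_abcd; rewrite eq_bd eqxx !orbT andbF.
Qed.

Definition exceptional : bool :=
  [|| n == 4,
      [&& m == 1, 4 < n & l == 3],
      [&& m == 1, 4 < n, n %% 4 == 2 & l == n./2],
      [&& m == 1, 4 < n, n %% 4 == 0 & l == (n - 2)./2]
    | [&& m == 2, 4 < n & ((l == 0) || (l == 2))]].

Lemma exceptionalE : exceptional <-> square_parameters.
Proof. by rewrite /exceptional /square_parameters; split=> ?; lia. Qed.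

(* Cycles are even and, outside the exceptional cases, not of length 4. *)
Lemma girth_lower_bound c : is_graph_cycle (htg_adj m n l) c ->
  (if exceptional then 4 else 6) <= size c.
Proof.
move=> c_cycle; have /andP[/andP[/cycle_size_even even_c _] size_gt2] := c_cycle.
have size_ne4 : ~~ exceptional -> size c != 4.
  by move=> exc; apply/eqP=> /(four_cycle_square c_cycle)/exceptionalE; apply/negP.
by case: exceptional size_ne4; move: (size c) even_c size_gt2 => k; lia.
Qed.

Fact n_pos : 0 < n. Proof. exact: leq_trans n_ge4. Qed.

(* The vertex with given coordinates (meaningful for coordinates in range). *)
Definition vertex (p : nat * nat) : 'I_m * 'I_n :=
  (insubd (Ordinal m_pos) p.1, insubd (Ordinal n_pos) p.2).

Lemma coords_vertex p : in_range p -> coords (vertex p) = p.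
Proof. by case: p => i j /andP[lt_im lt_jn]; rewrite /coords /= !insubdK. Qed.

Lemma htg_adj_vertex p q : in_range p -> in_range q -> adjacent p q ->
  htg_adj m n l (vertex p) (vertex q).
Proof. by move=> rp rq; rewrite htg_adjE !coords_vertex. Qed.

Lemma cycle_of_coords s : all in_range s -> uniq s -> 2 < size s ->
  cycle (relpre vertex (htg_adj m n l)) s ->
  exists c, is_graph_cycle (htg_adj m n l) c /\ size c = size s.
Proof.
move=> range_s uniq_s size_s cycle_s; exists (map vertex s); rewrite size_map; split=> //.
rewrite /is_graph_cycle /ucycleb cycle_map cycle_s size_map size_s andbT /=.
rewrite map_inj_in_uniq // => p q /(allP range_s) rp /(allP range_s) rq eq_pq.
by rewrite -(coords_vertex rp) -(coords_vertex rq) eq_pq.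
Qed.

Ltac cycle_witness s :=
  apply: (@cycle_of_coords s); rewrite /= /in_range ?inE ?xpair_eqE /=;
  [ lia | done || lia | done
  | rewrite /relpre /=; repeat (apply/andP; split); try done; apply: htg_adj_vertex;
    rewrite /in_range /adjacent /vert_step /up_step /across_step /flat_step /jump_step /=;
    lia ].

Lemma four_cycle_exists : square_parameters ->
  exists c, is_graph_cycle (htg_adj m n l) c /\ size c = 4.
Proof.
case=> [n4|[[m1 [l3|[l2_eq_n|l2_eq_n_sub2]]]|[m2 [l0|l2]]]].
- cycle_witness [:: (0, 0); (0, 1); (0, 2); (0, 3)].
- cycle_witness [:: (0, 1); (0, 2); (0, 3); (0, 4)].
- cycle_witness [:: (0, 1); (0, 1 + l); (0, 2 + l); (0, 2)].
- cycle_witness [:: (0, 1); (0, 1 + l); (0, 2 + l); (0, 0)].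
- cycle_witness [:: (0, 0); (1, 0); (1, 1); (0, 1)].
- cycle_witness [:: (1, 0); (0, 2); (0, 1); (1, 1)].
Qed.

Lemma six_cycle_exists : ~ square_parameters ->
  exists c, is_graph_cycle (htg_adj m n l) c /\ size c = 6.
Proof.
rewrite /square_parameters => not_square.
have [m1|m_gt1] : m = 1 \/ 1 < m by lia.
- cycle_witness [:: (0, 1); (0, 2); (0, 3); (0, 3 + l); (0, 2 + l); (0, 1 + l)].
- cycle_witness [:: (0, 1); (1, 1); (1, 2); (1, 3); (0, 3); (0, 2)].
Qed.

Theorem htg_girth : girth_is (htg_adj m n l) (if exceptional then 4 else 6).
Proof.
split; last exact: girth_lower_bound.
case exc: exceptional.
- by apply: four_cycle_exists; apply/exceptionalE.
- by apply: six_cycle_exists => /exceptionalE; rewrite exc.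
Qed.

End HoneycombGirth.

Theorem theorem5p1 (m n l : nat) :
  1 <= m -> 4 <= n -> ~~ odd n ->
  odd l = odd m ->
  (* simple 3-regular: for m = 1, l is not congruent to +-1 mod n *)
  (m = 1 -> l %% n != 1 /\ l %% n != n - 1) ->
  (* normal form *)
  l <= n./2 ->
  girth_is (htg_adj m n l)
    (if [|| n == 4,
            [&& m == 1, 4 < n & l == 3],
            [&& m == 1, 4 < n, n %% 4 == 2 & l == n./2],
            [&& m == 1, 4 < n, n %% 4 == 0 & l == (n - 2)./2]
          | [&& m == 2, 4 < n & ((l == 0) || (l == 2))]]
     then 4 else 6).
Proof.
move=> m_pos n_ge4 even_n odd_l_m simple_m1 l_le_half_n.
have n_even : n %% 2 = 0 by lia.
have l_parity : l %% 2 = m %% 2 by lia.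
have l2_le_n : l + l <= n by lia.
have l_simple : m = 1 -> 1 < l.
  by move=> m1; have [] := simple_m1 m1; rewrite modn_small; lia.
exact: htg_girth.
Qed.
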